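(* Let $A = \langle \Sigma, Q, q_0, \tau, \phi\rangle$ be an NFA, let $\Psi : Q \to \tilde{Q}$ be a merge operation producing the NFA $\tilde{A} = \langle \Sigma, \tilde{Q}, \tilde{q}_0, \tilde{\tau}, \tilde{\phi}\rangle$, and let $Q^{\mathrm{r}}$ and $\tilde{Q}^{\mathrm{r}}$ be the sets of recurrent states of $A$ and $\tilde{A}$, respectively. If $Q^{\mathrm{r}}$ consists of a single closed communicating class, then $\Psi(Q^{\mathrm{r}}) \subseteq \tilde{Q}^{\mathrm{r}}$.
   Context: An NFA $A = \langle \Sigma, Q, q_0, \tau, \phi\rangle$ has finite alphabet $\Sigma$, finite state set $Q$, initial state $q_0$, transition function $\tau : Q\times\Sigma \to 2^Q$, termination function $\phi: Q \to \{0,1\}$; $\tau$ extends to strings by $\tau(q,\lambda)=\{q\}$, $\tau(q,x\sigma) = \bigcup_{q'\in\tau(q,x)}\tau(q',\sigma)$, and $\tau_\star(S) = \bigcup_{q\in S, x\in\Sigma^\star}\tau(q,x)$. States $q,q'$ communicate if $q' \in \tau_\star(q)$ and $q\in\tau_\star(q')$; the equivalence classes are communicating classes; a class $Q'$ is closed if $\tau_\star(Q') = Q'$. A state is recurrent if it belongs to some closed communicating class. $\tilde{A}$ is obtained from $A$ by a merge operation $\Psi : Q \to \tilde{Q}$ if $\Psi$ is surjective, $\Psi(q_0) = \tilde{q}_0$, $\phi(q) = \tilde{\phi}(\Psi(q))$ for all $q \in Q$, and for all $q\in Q$, $\sigma \in \Sigma$, $q' \in \tau(q,\sigma)$ implies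 $\Psi(q') \in \tilde{\tau}(\Psi(q),\sigma)$. *)

From mathcomp Require Import all_boot.
Set Implicit Arguments. Unset Strict Implicit. Unset Printing Implicit Defensive.

Record nfa (S Q : finType) := NFA {
  q0 : Q;
  tau : Q -> S -> {set Q};
  phi : Q -> bool }.

Section NFA.
Variables (S Q : finType) (A : nfa S Q).

(* extension of tau to strings: tau(q, lambda) = {q}, tau(q, x s) = U_{q' in tau(q,x)} tau(q', s) *)
Fixpoint tau_str_rev (q : Q) (w : seq S) : {set Q} :=
  match w with
  | [::] => [set q]
  | s :: w' => \bigcup_(q' in tau_str_rev q w') tau A q' s
  end.
Definition tau_str (q : Q) (w : seq S) : {set Q} := tau_str_rev q (rev w).

Definition reach (q q' : Q) : Prop := exists w : seq S, q' \in tau_str q w.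

Definition tau_star (X : Q -> Prop) : Q -> Prop :=
  fun q' => exists2 q, X q & reach q q'.

Definition communicate (q q' : Q) : Prop := reach q q' /\ reach q' q.

(* sets of states are represented as predicates Q -> Prop; equality of sets is extensional *)
Definition comm_class (q : Q) : Q -> Prop := fun q' => communicate q q'.

Definition is_comm_class (C : Q -> Prop) : Prop :=
  exists q, forall x, C x <-> comm_class q x.

Definition closed_class (C : Q -> Prop) : Prop :=
  is_comm_class C /\ (forall x, tau_star C x <-> C x).

Definition recurrent (q : Q) : Prop :=
  exists C, closed_class C /\ C q.
End NFA.

Definition merge_op (S Q Q' : finType) (A : nfa S Q) (A' : nfa S Q') (Psi : Q -> Q') : Prop :=
  [/\ forall y : Q', exists x, Psi x = y,
      Psi (q0 A) = q0 A',
      forall q, phi A q = phi A' (Psi q) &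
      forall q (s : S) q', q' \in tau A q s -> Psi q' \in tau A' (Psi q) s].

From mathcomp Require Import all_boot.

(* Every state reaches a state z whose forward closure is minimal; such a z
   communicates with everything it reaches, so its class is closed and z is
   recurrent.  When the recurrent states form a single class, every state of A
   therefore reaches each recurrent state q.  A merge maps transitions, hence
   reachability, forward, and it is surjective, so every state of the merged
   automaton reaches Psi q; a state reachable from everywhere is recurrent. *)

Lemma connect_homo (T T' : finType) (e : rel T) (e' : rel T') (f : T -> T') :
  {homo f : x y / e x y >-> e' x y} ->
  {homo f : x y / connect e x y >-> connect e' x y}.
Proof.
move=> f_homo x y /connectP [p]; elim: p x => [|z p IHp] x /=.
  by move=> _ ->.
case/andP=> exz pz y_last; apply: connect_trans (connect1 (f_homo _ _ exz)) _.
exact: IHp.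
Qed.

Section Reachability.
Variables (S Q : finType) (A : nfa S Q).

Definition nfa_edge : rel Q := fun q q' => [exists s, q' \in tau A q s].

Lemma reach_edgeP (x y : Q) : reach A x y <-> connect nfa_edge x y.
Proof.
rewrite /reach /tau_str; split.
  case=> w; elim/last_ind: w y => [|w s IHw] y /=.
    by rewrite inE => /eqP ->.
  rewrite rev_rcons /= => /bigcupP [z xz zy].
  by apply: connect_trans (IHw _ xz) (connect1 _); apply/existsP; exists s.
case/connectP=> p; elim/last_ind: p y => [|p z IHp] y /=.
  by move=> _ ->; exists [::]; rewrite inE.
rewrite rcons_path last_rcons => /andP [xp /existsP [s zy]] ->.
have [w xz] := IHp _ xp erefl; exists (rcons w s).
by rewrite rev_rcons /=; apply/bigcupP; exists (last x p).
Qed.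

Lemma reach_refl (x : Q) : reach A x x.
Proof. exact/reach_edgeP. Qed.

Lemma reach_trans {x y z : Q} : reach A x y -> reach A y z -> reach A x z.
Proof. by move=> /reach_edgeP xy /reach_edgeP yz; apply/reach_edgeP/(connect_trans xy). Qed.

Lemma exists_reach_bottom (x : Q) :
  exists2 z, reach A x z & forall y, reach A z y -> reach A y z.
Proof.
pose succ z := [set u | connect nfa_edge z u].
case: (arg_minnP (fun z => #|succ z|) (connect0 nfa_edge x)) => z xz z_min.
exists z => [|y /reach_edgeP zy]; first exact/reach_edgeP.
have succ_yz : succ y \subset succ z.
  by apply/subsetP=> u; rewrite !inE; apply: connect_trans.
have /eqP succ_eq : succ y == succ z.
  by rewrite -(subset_leqif_cards succ_yz) eqn_leq subset_leq_card // z_min //;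
     apply: connect_trans zy.
have : z \in succ y by rewrite succ_eq inE.
by rewrite inE => /reach_edgeP.
Qed.

Lemma comm_class_closed {z : Q} :
  (forall y, reach A z y -> reach A y z) -> closed_class A (comm_class A z).
Proof.
move=> z_bottom; split; first by exists z.
move=> y; split=> [[x [zx _] xy] | zy]; last by exists y => //; apply: reach_refl.
by have zy := reach_trans zx xy; split=> //; apply: z_bottom.
Qed.

Lemma recurrent_bottom {z : Q} :
  (forall y, reach A z y -> reach A y z) -> recurrent A z.
Proof.
by move=> z_bottom; exists (comm_class A z); split;
  [apply: comm_class_closed | split; apply: reach_refl].
Qed.

Lemma reach_unique_recurrent_class (C : Q -> Prop) (q : Q) :
  closed_class A C -> (forall x, recurrent A x <-> C x) -> C q ->
  forall x, reach A x q.
Proof.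
move=> [[c C_def] _] rec_C Cq x; have [z xz z_bottom] := exists_reach_bottom x.
have /rec_C /C_def [_ zc] := recurrent_bottom z_bottom.
by have /C_def [cq _] := Cq; apply: reach_trans xz (reach_trans zc cq).
Qed.

End Reachability.

Lemma merge_op_reach (S Q Q' : finType) (A : nfa S Q) (A' : nfa S Q')
    (Psi : Q -> Q') :
  merge_op A A' Psi -> forall x y, reach A x y -> reach A' (Psi x) (Psi y).
Proof.
case=> _ _ _ Psi_tau x y /reach_edgeP xy; apply/reach_edgeP.
apply: connect_homo xy => {}x {}y /existsP [s xy].
by apply/existsP; exists s; apply: Psi_tau.
Qed.

Theorem lemma4 (S Q Q' : finType) (A : nfa S Q) (A' : nfa S Q') (Psi : Q -> Q') :
  merge_op A A' Psi ->
  (exists C : Q -> Prop, closed_class A C /\ (forall q, recurrent A q <-> C q)) ->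
  forall q : Q, recurrent A q -> recurrent A' (Psi q).
Proof.
move=> merge [C [C_closed rec_C]] q /rec_C Cq.
have [Psi_surj _ _ _] := merge.
have reach_Psi_q y' : reach A' y' (Psi q).
  have [x <-] := Psi_surj y'; apply: merge_op_reach merge _ _ _.
  exact: reach_unique_recurrent_class C_closed rec_C Cq x.
by apply: recurrent_bottom => y' _; apply: reach_Psi_q.
Qed.
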